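(* For every $M,N\ge 0$, the poset of shuffles $W_{MN}$ is locally rank-symmetric: for every interval $[u,v]$ of $W_{MN}$ and every $r\ge 0$, the number of elements of $[u,v]$ of rank $\rho(u)+r$ equals the number of elements of $[u,v]$ of rank $\rho(v)-r$.
   Context: Let $\mathcal{A}=\{a_1,\dots,a_M\}$ and $\mathcal{X}=\{x_1,\dots,x_N\}$ be disjoint finite sets. A shuffle word is a word (possibly empty) with distinct letters from $\mathcal{A}\cup\mathcal{X}$ in which the letters from $\mathcal{A}$ appear in increasing order of subscripts and the letters from $\mathcal{X}$ appear in increasing order of subscripts. The poset of shuffles $W_{MN}$ is the set of shuffle words ordered by the reflexive-transitive closure of: $w$ is covered by $w'$ iff $w'$ is obtained from $w$ by deleting a letter of $\mathcal{A}$ or inserting a letter of $\mathcal{X}$. It is ranked with rank function $\rho(w)=(M-\#(\{w\}\cap\mathcal{A}))+\#(\{w\}\cap\mathcal{X})$, where $\{w\}$ is the set of letters of $w$. *)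

From mathcomp Require Import all_boot.
Set Implicit Arguments. Unset Strict Implicit. Unset Printing Implicit Defensive.

Section Shuffles.
Variables M N : nat.

(* Letters: inl i is a_{i+1} (i < M), inr j is x_{j+1} (j < N). *)
Definition letter := ('I_M + 'I_N)%type.

Definition subA (l : letter) : option nat := if l is inl i then Some (val i) else None.
Definition subX (l : letter) : option nat := if l is inr j then Some (val j) else None.

Definition shuffle (w : seq letter) : bool :=
  [&& uniq w, sorted ltn (pmap subA w) & sorted ltn (pmap subX w)].

(* Words of length <= M + N (every shuffle word has this property),
   packed as a finite type. *)
Definition bword := {n : 'I_(M + N).+1 & n.-tuple letter}.
Definition bword_seq (t : bword) : seq letter := val (tagged t).

Definition W := {t : bword | shuffle (bword_seq t)}.
Definition word (w : W) : seq letter := bword_seq (val w).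

(* w is covered by w' iff w' is obtained from w by deleting a letter of A
   or inserting a letter of X (letters are distinct, so deleting the letter
   l is rem l). *)
Definition covered (w w' : W) : bool :=
  [exists i : 'I_M, (inl i \in word w) && (word w' == rem (inl i) (word w))] ||
  [exists j : 'I_N, (inr j \in word w') && (word w == rem (inr j) (word w'))].

Definition shle (u v : W) : bool := connect covered u v.

Definition rho (w : W) : nat :=
  (M - count (fun l => subA l != None) (word w)) + count (fun l => subX l != None) (word w).

End Shuffles.

From mathcomp Require Import all_boot zify.
Set Implicit Arguments. Unset Strict Implicit. Unset Printing Implicit Defensive.

(* An element w of the interval [u, v] consists of the letters common to u and
   v, some of the A-letters of u missing from v and some of the X-letters of v
   missing from u, and it keeps the relative order of u and of v.  Scanning u,
   v and w from the left, [mirror] copies common letters and toggles each such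
   A-letter and X-letter between present and absent, except that an A-letter
   followed in w by the next X-letter to be toggled is kept together with it.
   This is an involution of the interval sending rho(w) to
   rho(u) + rho(v) - rho(w), so it exchanges the elements of rank rho(u) + r
   with those of rank rho(v) - r. *)

Lemma mem_cons_notin (T : eqType) (l y : T) (s t : seq T) :
  l \notin t -> y \in t -> (y \in l :: s) = (y \in s).
Proof. by move=> lt yt; rewrite in_cons; case: eqP => // E; rewrite -E yt in lt. Qed.

Lemma prefix1 (T : eqType) (l y : T) (s : seq T) : prefix [:: l] (y :: s) = (l == y).
Proof. by rewrite prefix_cons prefix0s andbT. Qed.

Lemma notin_prefix (T : eqType) (l : T) (t s : seq T) :
  l \notin s -> prefix (l :: t) s = false.
Proof. by case: s => // y s; rewrite prefix_cons in_cons; case: eqP. Qed.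

Lemma subseq_pmap (T U : eqType) (f : T -> option U) (r1 r2 : seq T) :
  subseq r1 r2 -> subseq (pmap f r1) (pmap f r2).
Proof.
case/subseqP=> m _ ->; elim: r2 m => [|y r2 IH] [|[] m] //=; rewrite ?sub0seq //.
all: case: (f y) => [z|] //=; rewrite ?eqxx ?IH //.
exact: subseq_trans (IH m) (subseq_cons _ z).
Qed.

Lemma eq_pmap_filter (T U : eqType) (f : T -> option U) (P : pred T) (s : seq T) :
  {in s, forall y, ~~ P y -> f y = None} -> pmap f [seq y <- s | P y] = pmap f s.
Proof.
elim: s => //= y s IHs fs.
rewrite -IHs => [|z zs]; last by apply: fs; rewrite in_cons zs orbT.
by case Py: (P y) => //=; rewrite fs ?mem_head ?Py.
Qed.

Lemma card_involution (T : finType) (f : T -> T) (A B : {set T}) :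
  involutive f -> f @: A \subset B -> f @: B \subset A -> #|A| = #|B|.
Proof.
move=> fK AB BA; have f_inj := inv_inj fK.
apply/eqP; rewrite eqn_leq; apply/andP; split.
  by rewrite -(card_imset A f_inj); apply: subset_leq_card.
by rewrite -(card_imset B f_inj); apply: subset_leq_card.
Qed.

Section Words.
Variables M N : nat.
Local Notation letter := (letter M N).
Implicit Types (l a x y : letter) (s t u v w z : seq letter).

Definition isA l : bool := subA l != None.
Definition isX l : bool := subX l != None.

Lemma isXE l : isX l = ~~ isA l. Proof. by case: l. Qed.

Lemma isX_A l : isA l -> isX l = false. Proof. by rewrite isXE => ->. Qed.

Lemma isA_X l : isX l -> isA l = false. Proof. by rewrite isXE => /negbTE. Qed.

(** * Intervals of shuffle words *)

Definition word_le u w : bool :=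
  [&& all (fun l => isA l ==> (l \in u)) w, all (fun l => isX l ==> (l \in w)) u &
      [seq l <- u | l \in w] == [seq l <- w | l \in u]].

Lemma word_le_refl : reflexive word_le.
Proof.
move=> u; rewrite /word_le eqxx andbT.
by apply/andP; split; apply/allP=> y ->; rewrite implybT.
Qed.

Lemma word_le_trans : transitive word_le.
Proof.
move=> w u z /and3P[/allP Awu /allP Xuw /eqP Fuw] /and3P[/allP Azw /allP Xwz /eqP Fwz].
have uzw y : y \in u -> y \in z -> y \in w.
  move=> yu yz; case Ay: (isA y); first by have := Azw y yz; rewrite Ay.
  by have := Xuw y yu; rewrite isXE Ay.
have filter_w s t : {in s, forall y, y \in t -> y \in w} ->
    [seq y <- s | y \in t] = [seq y <- [seq y <- s | y \in w] | y \in t].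
  move=> stw; rewrite -filter_predI; apply: eq_in_filter => y ys /=.
  by case yt: (y \in t); rewrite ?andbF ?(stw y ys yt).
apply/and3P; split.
- apply/allP=> y yz; apply/implyP=> Ay.
  by apply: (implyP (Awu y _) Ay); apply: (implyP (Azw y yz)).
- apply/allP=> y yu; apply/implyP=> Xy.
  by apply: (implyP (Xwz y _) Xy); apply: (implyP (Xuw y yu)).
rewrite (filter_w u z) => [|y yu yz]; last exact: uzw.
rewrite (filter_w z u) => [|y yz yu]; last exact: uzw.
by rewrite Fuw -Fwz -!filter_predI; apply/eqP/eq_filter => y /=; rewrite andbC.
Qed.

Lemma word_le_filterA l s : isA l -> word_le s [seq y <- s | y != l].
Proof.
move=> Al; apply/and3P; split.
- by apply/allP=> y; rewrite mem_filter => /andP[_ ->]; rewrite implybT.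
- apply/allP=> y ys; apply/implyP=> Xy; rewrite mem_filter ys andbT.
  by apply: contraTneq Xy => ->; rewrite isXE Al.
apply/eqP; rewrite -filter_predI; apply: eq_in_filter => y ys /=.
by rewrite mem_filter ys !andbT.
Qed.

Lemma word_le_filterX l s : isX l -> word_le [seq y <- s | y != l] s.
Proof.
move=> Xl; apply/and3P; split.
- apply/allP=> y ys; apply/implyP=> Ay; rewrite mem_filter ys andbT.
  by apply: contraTneq Xl => <-; rewrite isXE Ay.
- by apply/allP=> y; rewrite mem_filter => /andP[_ ->]; rewrite implybT.
apply/eqP; rewrite -filter_predI; apply: eq_in_filter => y ys /=.
by rewrite mem_filter ys !andbT.
Qed.

Lemma word_le_cons l u w : l \notin u -> l \notin w ->
  word_le (l :: u) (l :: w) = word_le u w.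
Proof.
move=> lu lw; rewrite /word_le /= !mem_head /= !implybT /= eqseq_cons eqxx /=.
rewrite (@eq_in_all _ _ (fun y => isA y ==> (y \in u)) w); last first.
  by move=> y yw /=; rewrite (mem_cons_notin _ lw yw).
rewrite (@eq_in_all _ _ (fun y => isX y ==> (y \in w)) u); last first.
  by move=> y yu /=; rewrite (mem_cons_notin _ lu yu).
rewrite (@eq_in_filter _ _ (fun y => y \in w) u); last first.
  by move=> y yu /=; rewrite (mem_cons_notin _ lu yu).
rewrite (@eq_in_filter _ _ (fun y => y \in u) w) // => y yw /=.
by rewrite (mem_cons_notin _ lw yw).
Qed.

Lemma word_le_consl a u w : isA a -> a \notin u -> a \notin w ->
  word_le (a :: u) w = word_le u w.
Proof.
move=> Aa au aw; rewrite /word_le /= (negbTE aw) isXE Aa /=.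
rewrite (@eq_in_all _ _ (fun y => isA y ==> (y \in u)) w); last first.
  by move=> y yw /=; rewrite (mem_cons_notin _ aw yw).
rewrite (@eq_in_filter _ _ (fun y => y \in u) w) // => y yw /=.
by rewrite (mem_cons_notin _ aw yw).
Qed.

Lemma word_le_consr x u w : isX x -> x \notin u -> x \notin w ->
  word_le u (x :: w) = word_le u w.
Proof.
move=> Xx xu xw; rewrite /word_le /= (negbTE xu) -[isA x]negbK -isXE Xx /=.
rewrite (@eq_in_all _ _ (fun y => isX y ==> (y \in w)) u); last first.
  by move=> y yu /=; rewrite (mem_cons_notin _ xu yu).
rewrite (@eq_in_filter _ _ (fun y => y \in w) u) // => y yu /=.
by rewrite (mem_cons_notin _ xu yu).
Qed.

Definition between u v w : bool := [&& uniq u, uniq v, uniq w, word_le u w & word_le w v].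

Lemma between_cons_uw a u v w : isA a -> a \notin u -> a \notin v -> a \notin w ->
  between (a :: u) v (a :: w) = between u v w.
Proof. by move=> Aa au av aw; rewrite /between /= au aw word_le_cons // word_le_consl. Qed.

Lemma between_cons_u a u v w : isA a -> a \notin u -> a \notin w ->
  between (a :: u) v w = between u v w.
Proof. by move=> Aa au aw; rewrite /between /= au word_le_consl. Qed.

Lemma between_cons_vw x u v w : isX x -> x \notin u -> x \notin v -> x \notin w ->
  between u (x :: v) (x :: w) = between u v w.
Proof. by move=> Xx xu xv xw; rewrite /between /= xv xw word_le_cons // word_le_consr. Qed.

Lemma between_cons_v x u v w : isX x -> x \notin v -> x \notin w ->
  between u (x :: v) w = between u v w.
Proof. by move=> Xx xv xw; rewrite /between /= xv word_le_consr. Qed.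

Lemma between_cons_uvw c u v w : c \notin u -> c \notin v -> c \notin w ->
  between (c :: u) (c :: v) (c :: w) = between u v w.
Proof. by move=> cu cv cw; rewrite /between /= cu cv cw !word_le_cons. Qed.

Section Between.
Variables u v w : seq letter.
Hypothesis uvw : between u v w.

Lemma between_mem y : y \in w -> (y \in u) || (y \in v).
Proof.
case/and5P: uvw => _ _ _ /and3P[/allP Aw _ _] /and3P[_ /allP Xw _] yw.
case Ay: (isA y); first by rewrite (implyP (Aw y yw) Ay).
by rewrite (implyP (Xw y yw)) ?orbT // isXE Ay.
Qed.

Lemma between_notin y : y \notin u -> y \notin v -> y \notin w.
Proof. by move=> yu yv; apply/negP=> /between_mem; rewrite (negbTE yu) (negbTE yv). Qed.

Lemma between_common y : y \in u -> y \in v -> y \in w.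
Proof.
case/and5P: uvw => _ _ _ /and3P[_ /allP Xu _] /and3P[/allP Av _ _] yu yv.
case Ay: (isA y); first exact: (implyP (Av y yv) Ay).
by apply: (implyP (Xu y yu)); rewrite isXE Ay.
Qed.

Lemma between_isA y : y \in u -> y \notin v -> isA y.
Proof.
case/and5P: uvw => _ _ _ /and3P[_ /allP Xu _] /and3P[_ /allP Xw _] yu.
apply: contraR; rewrite -isXE => Xy.
by rewrite (implyP (Xw y (implyP (Xu y yu) Xy)) Xy).
Qed.

Lemma between_isX y : y \in v -> y \notin u -> isX y.
Proof.
case/and5P: uvw => _ _ _ /and3P[/allP Aw _ _] /and3P[/allP Av _ _] yv.
apply: contraR; rewrite isXE negbK => Ay.
by rewrite (implyP (Aw y (implyP (Av y yv) Ay)) Ay).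
Qed.

End Between.

Lemma between_nil w : between [::] [::] w -> w = [::].
Proof. by case: w => // y w /between_mem/(_ y (mem_head y w)). Qed.

Lemma between_head_u c u v l w : between (c :: u) v (l :: w) ->
  c \in l :: w -> l \in c :: u -> c = l.
Proof.
case/and5P=> _ _ _ /and3P[_ _ /eqP] + _ cw lu.
by rewrite /= cw lu => -[].
Qed.

Lemma between_head_v c u v l w : between u (c :: v) (l :: w) ->
  c \in l :: w -> l \in c :: v -> c = l.
Proof.
case/and5P=> _ _ _ _ /and3P[_ _ /eqP] + cw lv.
by rewrite /= cw lv => -[].
Qed.

Lemma between_head a u x v l w : between (a :: u) (x :: v) (l :: w) ->
  a \in l :: w -> x \in l :: w -> (l == a) || (l == x).
Proof.
move=> uvw aw xw; case/orP: (between_mem uvw (mem_head l w)) => [lu|lv].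
  by rewrite (between_head_u uvw aw lu) eqxx.
by rewrite (between_head_v uvw xw lv) eqxx orbT.
Qed.

Lemma between_prefix a u x v w : between (a :: u) (x :: v) w ->
  a \in w -> x \in w -> prefix [:: a] w || prefix [:: x] w.
Proof.
case: w => // l w uvw aw xw.
by rewrite !prefix1 ![_ == l]eq_sym; apply: between_head uvw aw xw.
Qed.

Lemma between_prefixA a u v w : between (a :: u) v w ->
  (if v is x :: _ then x \in a :: u else true) -> a \in w -> prefix [:: a] w.
Proof.
case: w => // l w; case: v => [|x v] uvw.
  move=> _ aw; have := between_mem uvw (mem_head l w); rewrite orbF prefix1 => lu.
  by rewrite (between_head_u uvw aw lu).
move=> xu aw; have xw := between_common uvw xu (mem_head x v).
case/orP: (between_prefix uvw aw xw) => //; rewrite !prefix1 => /eqP xl; subst l.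
by rewrite (between_head_u uvw aw xu).
Qed.

Lemma between_prefixX x u v w : between u (x :: v) w ->
  (if u is a :: _ then a \in x :: v else true) -> x \in w -> prefix [:: x] w.
Proof.
case: w => // l w; case: u => [|a u] uvw.
  move=> _ xw; have := between_mem uvw (mem_head l w); rewrite prefix1 => /= lv.
  by rewrite (between_head_v uvw xw lv).
move=> av xw; have aw := between_common uvw (mem_head a u) av.
case/orP: (between_prefix uvw aw xw) => //; rewrite !prefix1 => /eqP al; subst l.
by rewrite (between_head_v uvw xw av).
Qed.

Lemma between_common_head a u x v w : between (a :: u) (x :: v) w ->
  a \in x :: v -> x \in a :: u -> x = a /\ prefix [:: a] w.
Proof.
move=> uvw av xu; have aw := between_common uvw (mem_head a u) av.
have /prefixP[w' Ew] := between_prefixA uvw xu aw.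
split; last by rewrite Ew prefix_prefix.
move: uvw; rewrite Ew /= => uvw.
have xw := between_common uvw xu (mem_head x v).
exact: between_head_v uvw xw av.
Qed.

Lemma between_fresh_heads a u x v w : between (a :: u) (x :: v) w ->
  a \notin x :: v -> x \notin a :: u ->
  [/\ isA a, isX x, a != x, (a \notin u) && (a \notin v) & (x \notin u) && (x \notin v)].
Proof.
move=> uvw av xu; have /and5P[/andP[-> _] /andP[-> _] _ _ _] := uvw.
rewrite (between_isA uvw (mem_head a u) av) (between_isX uvw (mem_head x v) xu).
by move: av xu; rewrite !in_cons !negb_or => /andP[-> ->] /andP[_ ->].
Qed.

Lemma shuffle_subseq s t : subseq s t -> shuffle t -> shuffle s.
Proof.
move=> st /and3P[Ut SA SX]; apply/and3P; split; first exact: subseq_uniq st Ut.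
  by apply: (subseq_sorted ltn_trans _ SA); apply: subseq_pmap.
by apply: (subseq_sorted ltn_trans _ SX); apply: subseq_pmap.
Qed.

Lemma shuffle_between u v z : between u v z -> shuffle u -> shuffle v -> shuffle z.
Proof.
case/and5P=> _ _ Uz /and3P[/allP Az _ /eqP Fuz] /and3P[_ /allP Xz /eqP Fzv].
case/and3P=> _ SA _ /and3P[_ _ SX]; apply/and3P; split=> //.
  rewrite -(@eq_pmap_filter _ _ _ (fun y => y \in u)) => [|y yz yu]; last first.
    by move: (implyP (Az y yz)); rewrite (negbTE yu) /isA; case: (subA y) => // n /(_ isT).
  by rewrite -Fuz; apply: (subseq_sorted ltn_trans _ SA); apply/subseq_pmap/filter_subseq.
rewrite -(@eq_pmap_filter _ _ _ (fun y => y \in v)) => [|y yz yv]; last first.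
  by move: (implyP (Xz y yz)); rewrite (negbTE yv) /isX; case: (subX y) => // n /(_ isT).
by rewrite Fzv; apply: (subseq_sorted ltn_trans _ SX); apply/subseq_pmap/filter_subseq.
Qed.

Lemma count_isA_le s : shuffle s -> count isA s <= M.
Proof.
case/and3P=> _ SA _; rewrite -[X in _ <= X](size_iota 0 M).
have -> : count isA s = size (pmap (@subA M N) s).
  by rewrite size_pmap; apply: eq_count => y; rewrite /isA; case: (subA y).
apply: uniq_leq_size; first exact: sorted_uniq ltn_trans ltnn _ SA.
by move=> i; rewrite mem_pmap => /mapP[[j|j] _ //= [->]]; rewrite mem_iota /= ltn_ord.
Qed.

(** * An involution of an interval *)

Definition toggle s w := if prefix s w then ([::], s) else (s, [::]).

(* With [step u v w = (p, q, (u1, v1))], the image of [w] starts with [p] where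
   [w] starts with [q], and the rest of [w] lies in the smaller interval
   [u1, v1].  Exchanging [p] and [q] gives the step taken on the image
   ([step_swap]). *)
Definition step u v w : seq letter * seq letter * (seq letter * seq letter) :=
  match u, v with
  | a :: u', x :: v' =>
    if a \in v then
      if x \in u then ([:: a], [:: a], (u', v')) else (toggle [:: x] w, (u, v'))
    else if x \in u then (toggle [:: a] w, (u', v))
    else if (x \notin w) || prefix [:: x] w then (toggle [:: x] w, (u, v'))
    else if prefix [:: a; x] w then ([:: a; x], [:: a; x], (u', v'))
    else (toggle [:: a] w, (u', v))
  | a :: u', [::] => (toggle [:: a] w, (u', [::]))
  | [::], x :: v' => (toggle [:: x] w, ([::], v'))
  | [::], [::] => ([::], [::], ([::], [::]))
  end.

Lemma step_size n u v w p q u1 v1 : step u v w = (p, q, (u1, v1)) ->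
  size u + size v <= n.+1 -> size u1 + size v1 <= n.
Proof.
move=> /(congr1 snd); rewrite /step.
by case: u => [|a u]; case: v => [|x v]; repeat case: ifP => _; case=> <- <- /=; lia.
Qed.

Lemma toggle_cat s w p q : toggle s w = (p, q) -> p ++ q = s.
Proof. by rewrite /toggle; case: ifP => _ [<- <-]; rewrite ?cats0. Qed.

Lemma toggleA_between a u v w p q : between (a :: u) v w -> a \notin v ->
  (a \in w -> prefix [:: a] w) -> toggle [:: a] w = (p, q) ->
  prefix q w && between u v (drop (size q) w).
Proof.
move=> uvw av aw; have Aa := between_isA uvw (mem_head a u) av.
have /and5P[/andP[au _] _ _ _ _] := uvw.
rewrite /toggle; case: ifP => [/prefixP[w' Ew] [_ <-]|wa [_ <-]].
  move: uvw; rewrite Ew => uvw; have /and5P[_ _ /andP[aw' _] _ _] := uvw.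
  by rewrite prefix_prefix drop_size_cat // -(between_cons_uw Aa au av aw').
rewrite prefix0s drop0 -(between_cons_u v Aa au) //; apply: contraFN wa; exact: aw.
Qed.

Lemma toggleX_between x u v w p q : between u (x :: v) w -> x \notin u ->
  (x \in w -> prefix [:: x] w) -> toggle [:: x] w = (p, q) ->
  prefix q w && between u v (drop (size q) w).
Proof.
move=> uvw xu xw; have Xx := between_isX uvw (mem_head x v) xu.
have /and5P[_ /andP[xv _] _ _ _] := uvw.
rewrite /toggle; case: ifP => [/prefixP[w' Ew] [_ <-]|wx [_ <-]].
  move: uvw; rewrite Ew => uvw; have /and5P[_ _ /andP[xw' _] _ _] := uvw.
  by rewrite prefix_prefix drop_size_cat // -(between_cons_vw Xx xu xv xw').
rewrite prefix0s drop0 -(between_cons_v u Xx xv) //; apply: contraFN wx; exact: xw.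
Qed.

Lemma step_between u v w p q u1 v1 : between u v w -> step u v w = (p, q, (u1, v1)) ->
  prefix q w && between u1 v1 (drop (size q) w).
Proof.
rewrite /step; case: u => [|a u]; case: v => [|x v] uvw.
- by case=> _ <- <- <-; rewrite prefix0s drop0.
- by case=> E <- <-; apply: toggleX_between uvw (negbT (in_nil x)) (between_prefixX uvw isT) E.
- by case=> E <- <-; apply: toggleA_between uvw (negbT (in_nil a)) (between_prefixA uvw isT) E.
case: ifP => av; first case: ifP => xu.
- case=> _ <- <- <-; have [xa /prefixP[w' Ew]] := between_common_head uvw av xu.
  subst x w; rewrite prefix_prefix drop_size_cat //=.
  have /and5P[/andP[au _] /andP[av' _] /andP[aw' _] _ _] := uvw.
  by rewrite -(between_cons_uvw au av' aw').
- by case=> E <- <-; apply: toggleX_between uvw (negbT xu) (between_prefixX uvw av) E.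
case: ifP => xu.
  by case=> E <- <-; apply: toggleA_between uvw (negbT av) (between_prefixA uvw xu) E.
case: ifP => [xw|/norP[/negbNE xw /negbTE wx]].
  case=> E <- <-; apply: toggleX_between uvw (negbT xu) _ E.
  by case/orP: xw => [/negbTE->|].
case: ifP => [/prefixP[w' Ew]|_]; case; last first.
  move=> E <- <-; apply: (toggleA_between uvw (negbT av) _ E) => aw.
  by have := between_prefix uvw aw xw; rewrite wx orbF.
move=> _ <- <- <-; move: uvw; rewrite Ew prefix_prefix drop_size_cat //= => uvw.
have [Aa Xx ax /andP[au av'] /andP[xu' xv]] := between_fresh_heads uvw (negbT av) (negbT xu).
have /and5P[_ _ /and3P[aw' xw' _] _ _] := uvw.
by rewrite (between_cons_uw Aa au (negbT av) aw') (between_cons_vw Xx xu' xv xw') in uvw.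
Qed.

Lemma toggleA_emit a u v w p q z : between (a :: u) v w -> a \notin v ->
  toggle [:: a] w = (p, q) -> between u v z -> between (a :: u) v (p ++ z).
Proof.
move=> uvw av E uvz; have Aa := between_isA uvw (mem_head a u) av.
have /and5P[/andP[au _] _ _ _ _] := uvw; have az := between_notin uvz au av.
by move: E; rewrite /toggle; case: ifP => _ [<- _] /=; rewrite ?between_cons_uw ?between_cons_u.
Qed.

Lemma toggleX_emit x u v w p q z : between u (x :: v) w -> x \notin u ->
  toggle [:: x] w = (p, q) -> between u v z -> between u (x :: v) (p ++ z).
Proof.
move=> uvw xu E uvz; have Xx := between_isX uvw (mem_head x v) xu.
have /and5P[_ /andP[xv _] _ _ _] := uvw; have xz := between_notin uvz xu xv.
by move: E; rewrite /toggle; case: ifP => _ [<- _] /=; rewrite ?between_cons_vw ?between_cons_v.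
Qed.

Lemma step_emit u v w p q u1 v1 z : between u v w -> step u v w = (p, q, (u1, v1)) ->
  between u1 v1 z -> between u v (p ++ z).
Proof.
rewrite /step; case: u => [|a u]; case: v => [|x v] uvw.
- by case=> <- _ <- <-.
- by case=> E <- <-; apply: toggleX_emit uvw (negbT (in_nil x)) E.
- by case=> E <- <-; apply: toggleA_emit uvw (negbT (in_nil a)) E.
case: ifP => av; first case: ifP => xu.
- case=> <- _ <- <- uvz; have [xa _] := between_common_head uvw av xu; subst x.
  have /and5P[/andP[au _] /andP[av' _] _ _ _] := uvw.
  by rewrite /= between_cons_uvw // (between_notin uvz au av').
- by case=> E <- <-; apply: toggleX_emit uvw (negbT xu) E.
case: ifP => xu; first by case=> E <- <-; apply: toggleA_emit uvw (negbT av) E.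
case: ifP => _; first by case=> E <- <-; apply: toggleX_emit uvw (negbT xu) E.
case: ifP => _; last by case=> E <- <-; apply: toggleA_emit uvw (negbT av) E.
case=> <- _ <- <- uvz.
have [Aa Xx ax /andP[au av'] /andP[xu' xv]] := between_fresh_heads uvw (negbT av) (negbT xu).
have axz : a \notin x :: z by rewrite in_cons negb_or ax (between_notin uvz au av').
have xz := between_notin uvz xu' xv.
by rewrite /= (between_cons_uw Aa au (negbT av) axz) (between_cons_vw Xx xu' xv xz).
Qed.

Definition same_excess s t :=
  count isX s + count isA t = count isA s + count isX t.

Lemma perm_same_excess s t : perm_eq s t -> same_excess s t.
Proof. by move/permP=> st; rewrite /same_excess !st addnC. Qed.

Lemma step_excess u v w p q u1 v1 : between u v w -> step u v w = (p, q, (u1, v1)) ->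
  same_excess (p ++ q ++ u1 ++ v1) (u ++ v).
Proof.
have toggle_excess s s' t p' q' : toggle s w = (p', q') -> perm_eq (s ++ s') t ->
    same_excess (p' ++ q' ++ s') t.
  by move=> E ss't; rewrite catA (toggle_cat E); apply: perm_same_excess.
rewrite /step; case: u => [|a u]; case: v => [|x v] uvw; first by case=> <- <- <- <-.
1,2: by case=> E <- <-; apply: toggle_excess E _.
case: ifP => av; first case: ifP => xu.
- case=> <- <- <- <-; have [-> _] := between_common_head uvw av xu.
  by rewrite /same_excess /= !count_cat /=; lia.
- by case=> E <- <-; apply: toggle_excess E _; rewrite perm_catCA.
case: ifP => xu; first by case=> E <- <-; apply: toggle_excess E _.
have [Aa Xx _ _ _] := between_fresh_heads uvw (negbT av) (negbT xu).
case: ifP => _; first by case=> E <- <-; apply: toggle_excess E _; rewrite perm_catCA.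
case: ifP => _; last by case=> E <- <-; apply: toggle_excess E _.
case=> <- <- <- <-; rewrite /same_excess /= !count_cat /=.
by rewrite Aa Xx (isX_A Aa) (isA_X Xx); lia.
Qed.

(* Preserved by [mirror_rec]; [step_swap] needs it to take the matching branch
   on the image of [w]. *)
Definition delayed_ins u v w : bool :=
  if v is x :: _ then [&& x \notin u, x \in w & ~~ prefix [:: x] w] else false.

Lemma toggleA_delayed a u x v w p q : a != x -> x \notin u -> x \in w ->
  ~~ prefix [:: x] w -> ~~ prefix [:: a; x] w -> toggle [:: a] w = (p, q) ->
  delayed_ins u (x :: v) (drop (size q) w).
Proof.
move=> ax xu xw wx wax; rewrite /toggle /=; case: ifP => [/prefixP[w' Ew]|_] [_ <-] /=.
  move: xw wax; rewrite Ew /= in_cons eqxx eq_sym (negbTE ax) drop0 /= => xw' wx'.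
  by rewrite xu xw' wx'.
by rewrite drop0 xu xw wx.
Qed.

Lemma step_delayed u v w p q u1 v1 : between u v w -> step u v w = (p, q, (u1, v1)) ->
  delayed_ins u v w -> forall z, (delayed_ins u1 v1 (drop (size q) w) -> delayed_ins u1 v1 z) ->
  delayed_ins u v (p ++ z).
Proof.
rewrite /step; case: u => [|a u]; case: v => [|x v] uvw E // /and3P[xu xw wx].
  by rewrite (between_prefixX uvw isT xw) in wx.
move: E; rewrite (negbTE xu); case: ifP => av.
  by rewrite (between_prefixX uvw av xw) in wx.
have [_ _ ax /andP[_ _] /andP[xu' _]] := between_fresh_heads uvw (negbT av) xu.
rewrite xw (negbTE wx) /=; case: ifP => [_ [<- _ _ _] z _|wax [E <- <-] z Hz].
  by rewrite /= xu in_cons mem_head orbT eq_sym (negbTE ax).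
have /and3P[_ xz zx] := Hz (toggleA_delayed v ax xu' xw wx (negbT wax) E).
move: E; rewrite /toggle; case: ifP => _ [<- _] /=; first by rewrite xu xz.
by rewrite xu in_cons xz orbT eq_sym (negbTE ax).
Qed.

Lemma toggle_swap s w z p q : ~~ prefix s z -> toggle s w = (p, q) ->
  toggle s (p ++ z) = (q, p).
Proof.
rewrite /toggle => sz; case: ifP => _ [<- <-] /=; first by rewrite (negbTE sz).
by rewrite prefix_prefix.
Qed.

Lemma step_swap u v w p q u1 v1 z : between u v w -> step u v w = (p, q, (u1, v1)) ->
  between u1 v1 z -> (delayed_ins u1 v1 (drop (size q) w) -> delayed_ins u1 v1 z) ->
  step u v (p ++ z) = (q, p, (u1, v1)).
Proof.
rewrite /step; case: u => [|a u]; case: v => [|x v] uvw.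
- by case=> <- <- <- <-.
- have /and5P[_ /andP[xv _] _ _ _] := uvw; case=> E <- <- uvz _.
  by rewrite (toggle_swap _ E) // notin_prefix // (between_notin uvz _ xv).
- have /and5P[/andP[au _] _ _ _ _] := uvw; case=> E <- <- uvz _.
  by rewrite (toggle_swap _ E) // notin_prefix // (between_notin uvz au _).
case: ifP => av; first case: ifP => xu.
- by case=> <- <- <- <-.
- have /and5P[_ /andP[xv _] _ _ _] := uvw; case=> E <- <- uvz _.
  by rewrite (toggle_swap _ E) // notin_prefix // (between_notin uvz (negbT xu) xv).
case: ifP => xu.
  have /and5P[/andP[au _] _ _ _ _] := uvw; case=> E <- <- uvz _.
  by rewrite (toggle_swap _ E) // notin_prefix // (between_notin uvz au (negbT av)).
have [_ _ ax /andP[au _] /andP[xu' xv]] := between_fresh_heads uvw (negbT av) (negbT xu).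
have xa : (x == a) = false by rewrite eq_sym (negbTE ax).
case: ifP => [xw|/norP[/negbNE xw /negbTE wx]].
  case=> E <- <- uvz _; have xz := between_notin uvz (negbT xu) xv.
  have -> : (x \notin p ++ z) || prefix [:: x] (p ++ z).
    by move: E; rewrite /toggle; case: ifP => _ [<- _]; rewrite /= ?xz // eqxx prefix0s orbT.
  by rewrite (toggle_swap _ E) // notin_prefix.
case: ifP => wax.
  by case=> <- <- <- <- _ _; rewrite prefix_prefix /= in_cons mem_head orbT /= xa.
case=> E <- <- uvz Hz; have az := between_notin uvz au (negbT av).
have /and3P[_ xz zx] := Hz (toggleA_delayed v ax xu' xw (negbT wx) (negbT wax) E).
rewrite (toggle_swap _ E); last by rewrite notin_prefix.
move: E; rewrite /toggle; case: ifP => _ [<- _] /=.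
  by rewrite xz (negbTE zx) notin_prefix.
by rewrite in_cons xz orbT xa eqxx (negbTE zx).
Qed.

Fixpoint mirror_rec n u v w : seq letter :=
  if n is n'.+1 then
    let: (p, q, (u1, v1)) := step u v w in p ++ mirror_rec n' u1 v1 (drop (size q) w)
  else w.

Lemma mirror_recS n u v w p q u1 v1 : step u v w = (p, q, (u1, v1)) ->
  mirror_rec n.+1 u v w = p ++ mirror_rec n u1 v1 (drop (size q) w).
Proof. by move=> /= ->. Qed.

Lemma mirror_rec_between n u v w : size u + size v <= n -> between u v w ->
  between u v (mirror_rec n u v w).
Proof.
elim: n u v w => [|n IH] u v w Hsz uvw //.
case E: (step u v w) => [[p q] [u1 v1]]; rewrite (mirror_recS _ E).
have /andP[_ uvw1] := step_between uvw E.
exact: step_emit uvw E (IH _ _ _ (step_size E Hsz) uvw1).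
Qed.

Lemma mirror_rec_delayed n u v w : size u + size v <= n -> between u v w ->
  delayed_ins u v w -> delayed_ins u v (mirror_rec n u v w).
Proof.
elim: n u v w => [|n IH] u v w Hsz uvw //.
case E: (step u v w) => [[p q] [u1 v1]]; rewrite (mirror_recS _ E) => dw.
have /andP[_ uvw1] := step_between uvw E.
exact: step_delayed uvw E dw _ (IH _ _ _ (step_size E Hsz) uvw1).
Qed.

Lemma mirror_rec_excess n u v w : size u + size v <= n -> between u v w ->
  same_excess (mirror_rec n u v w ++ w) (u ++ v).
Proof.
elim: n u v w => [|n IH] u v w Hsz uvw.
  by move: Hsz uvw; case: u; case: v => // _ /between_nil ->.
case E: (step u v w) => [[p q] [u1 v1]]; rewrite (mirror_recS _ E).
have /andP[/prefixP[w1 Ew] uvw1] := step_between uvw E; subst w.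
rewrite drop_size_cat // in uvw1 *.
move: (IH _ _ _ (step_size E Hsz) uvw1) (step_excess uvw E).
by rewrite /same_excess !count_cat; lia.
Qed.

Lemma mirror_recK n u v w : size u + size v <= n -> between u v w ->
  mirror_rec n u v (mirror_rec n u v w) = w.
Proof.
elim: n u v w => [|n IH] u v w Hsz uvw //.
case E: (step u v w) => [[p q] [u1 v1]]; rewrite (mirror_recS _ E).
have /andP[/prefixP[w1 Ew] uvw1] := step_between uvw E; subst w.
have Hsz1 := step_size E Hsz; rewrite drop_size_cat // in uvw1 *.
have E' : step u v (p ++ mirror_rec n u1 v1 w1) = (q, p, (u1, v1)).
  apply: step_swap uvw E (mirror_rec_between Hsz1 uvw1) _.
  by rewrite drop_size_cat //; apply: mirror_rec_delayed Hsz1 uvw1.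
by rewrite (mirror_recS _ E') drop_size_cat // IH.
Qed.

(* Each step shortens [u] or [v]. *)
Definition mirror u v w := mirror_rec (size u + size v) u v w.

Lemma mirror_between u v w : between u v w -> between u v (mirror u v w).
Proof. exact: mirror_rec_between. Qed.

Lemma mirror_excess u v w : between u v w -> same_excess (mirror u v w ++ w) (u ++ v).
Proof. exact: mirror_rec_excess. Qed.

Lemma mirrorK u v w : between u v w -> mirror u v (mirror u v w) = w.
Proof. exact: mirror_recK. Qed.

End Words.

Arguments isA {M N} l.
Arguments isX {M N} l.

(** * Rank symmetry of the intervals of W_{MN} *)

Section Interval.
Variables M N : nat.
Local Notation W := (W M N).
Local Notation letter := (letter M N).
Implicit Types (u v w : W) (l : letter).

Lemma word_shuffle w : shuffle (word w). Proof. exact: valP w. Qed.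

Lemma word_uniq w : uniq (word w). Proof. by case/and3P: (word_shuffle w). Qed.

Lemma word_inj : injective (@word M N).
Proof.
move=> w1 w2; rewrite /word /bword_seq => E; apply: val_inj.
case: (val w1) (val w2) E => n1 t1 [n2 t2] /= E.
have En : n1 = n2 by apply: val_inj; rewrite /= -(size_tuple t1) -(size_tuple t2) E.
by subst n2; congr existT; apply: val_inj.
Qed.

Lemma shuffle_word s : shuffle s -> exists w : W, word w = s.
Proof.
move=> Hs; have Hsz : size s < (M + N).+1.
  have /and3P[Us _ _] := Hs; rewrite ltnS -(card_uniqP Us).
  by apply: leq_trans (max_card _) _; rewrite card_sum !card_ord.
by exists (exist _ (existT _ (Ordinal Hsz) (in_tuple s)) Hs).
Qed.

Lemma covered_remA u l : l \in word u -> isA l ->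
  exists2 u1, covered u u1 & word u1 = rem l (word u).
Proof.
move=> lu Al; have [u1 E] := shuffle_word (shuffle_subseq (rem_subseq l _) (word_shuffle u)).
exists u1 => //; case: l lu Al E => // i lu _ E.
by apply/orP; left; apply/existsP; exists i; rewrite lu E eqxx.
Qed.

Lemma covered_remX w l : l \in word w -> isX l ->
  exists2 w1, covered w1 w & word w1 = rem l (word w).
Proof.
move=> lw Xl; have [w1 E] := shuffle_word (shuffle_subseq (rem_subseq l _) (word_shuffle w)).
exists w1 => //; case: l lw Xl E => // j lw _ E.
by apply/orP; right; apply/existsP; exists j; rewrite lw E eqxx.
Qed.

Lemma shle_filterA (P : pred letter) u : {in word u, forall y, ~~ P y -> isA y} ->
  exists2 u', shle u u' & word u' = [seq y <- word u | P y].
Proof.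
move Hn: (count (predC P) (word u)) => n; elim: n u Hn => [|n IH] u Hn uA.
  exists u; first exact: connect0.
  by apply/esym/all_filterP; rewrite all_count -(count_predC P) Hn addn0.
have [l lu nPl] : exists2 l, l \in word u & ~~ P l by apply/hasP; rewrite has_count Hn.
have [u1 cov E1] := covered_remA lu (uA l lu nPl).
have [|y|u' u1u' E'] := IH u1; first by rewrite E1 count_rem lu /= nPl Hn subn1.
  by rewrite E1 => /mem_rem; apply: uA.
exists u'; first exact: connect_trans (connect1 cov) u1u'.
rewrite E' E1 rem_filter ?word_uniq // -filter_predI; apply: eq_filter => y /=.
by case: eqP => [->|]; rewrite ?(negbTE nPl) ?andbT.
Qed.

Lemma shle_filterX (P : pred letter) w : {in word w, forall y, ~~ P y -> isX y} ->
  exists2 w', shle w' w & word w' = [seq y <- word w | P y].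
Proof.
move Hn: (count (predC P) (word w)) => n; elim: n w Hn => [|n IH] w Hn wX.
  exists w; first exact: connect0.
  by apply/esym/all_filterP; rewrite all_count -(count_predC P) Hn addn0.
have [l lw nPl] : exists2 l, l \in word w & ~~ P l by apply/hasP; rewrite has_count Hn.
have [w1 cov E1] := covered_remX lw (wX l lw nPl).
have [|y|w' w'w1 E'] := IH w1; first by rewrite E1 count_rem lw /= nPl Hn subn1.
  by rewrite E1 => /mem_rem; apply: wX.
exists w'; first exact: connect_trans w'w1 (connect1 cov).
rewrite E' E1 rem_filter ?word_uniq // -filter_predI; apply: eq_filter => y /=.
by case: eqP => [->|]; rewrite ?(negbTE nPl) ?andbT.
Qed.

Lemma covered_word_le u w : covered u w -> word_le (word u) (word w).
Proof.
case/orP=> [|] /existsP[i /andP[_ /eqP ->]]; rewrite rem_filter ?word_uniq //.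
  by apply: word_le_filterA.
by apply: word_le_filterX.
Qed.

Lemma shle_word_le u w : shle u w -> word_le (word u) (word w).
Proof.
case/connectP=> p + ->; elim: p u => [|y p IHp] u /=; first by rewrite word_le_refl.
by case/andP=> /covered_word_le uy /IHp; apply: word_le_trans uy.
Qed.

Lemma word_le_shle u w : word_le (word u) (word w) -> shle u w.
Proof.
case/and3P=> /allP Aw /allP Xu /eqP E.
have [y yu|u' uu' Eu] := @shle_filterA (fun y => y \in word w) u.
  by apply: contraR; rewrite -isXE => /(implyP (Xu y yu)).
have [y yw|w' w'w Ew] := @shle_filterX (fun y => y \in word u) w.
  by apply: contraR; rewrite isXE negbK => /(implyP (Aw y yw)).
have u'w' : u' = w' by apply: word_inj; rewrite Eu Ew.
by apply: connect_trans uu' _; rewrite u'w'.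
Qed.

Lemma shle_between u v w : shle u w -> shle w v -> between (word u) (word v) (word w).
Proof. by move=> /shle_word_le uw /shle_word_le wv; rewrite /between !word_uniq uw wv. Qed.

(* The identity outside [u, v], so that [flip u v] is an involution of W_{MN}. *)
Definition flip u v w : W :=
  if shle u w && shle w v then
    odflt w [pick w' | word w' == mirror (word u) (word v) (word w)]
  else w.

Lemma flip_interval u v w : shle u w -> shle w v ->
  [/\ word (flip u v w) = mirror (word u) (word v) (word w),
      shle u (flip u v w) & shle (flip u v w) v].
Proof.
move=> uw wv; have /mirror_between uvz := shle_between uw wv.
have [z Ez] := shuffle_word (shuffle_between uvz (word_shuffle u) (word_shuffle v)).
have Ef : word (flip u v w) = mirror (word u) (word v) (word w).
  by rewrite /flip uw wv /=; case: pickP => [w' /eqP //|/(_ z) /=]; rewrite Ez eqxx.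
by move: uvz; rewrite -Ef => /and5P[_ _ _ /word_le_shle-> /word_le_shle->].
Qed.

Lemma flipK u v : involutive (flip u v).
Proof.
move=> w; case: (boolP (shle u w && shle w v)) => [/andP[uw wv]|out].
  have [E uf fv] := flip_interval uw wv; have [E' _ _] := flip_interval uf fv.
  by apply: word_inj; rewrite E' E mirrorK // shle_between.
by rewrite /flip (negbTE out) (negbTE out).
Qed.

Lemma rho_flip u v w : shle u w -> shle w v -> rho (flip u v w) + rho w = rho u + rho v.
Proof.
move=> uw wv; have [E _ _] := flip_interval uw wv.
have := mirror_excess (shle_between uw wv); rewrite -E /same_excess !count_cat.
have rhoE w' : rho w' = M - count isA (word w') + count isX (word w') by [].
have le_M w' := count_isA_le (word_shuffle w').
by rewrite !rhoE; move: (le_M u) (le_M v) (le_M w) (le_M (flip u v w)); lia.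
Qed.

End Interval.

Lemma interval_rank_symmetric (M N : nat) (u v : W M N) r :
  #|[set w : W M N | [&& shle u w, shle w v & rho w == rho u + r]]| =
  #|[set w : W M N | [&& shle u w, shle w v & rho w + r == rho v]]|.
Proof.
apply: (card_involution (flipK u v)); apply/subsetP => _ /imsetP[w + ->];
  rewrite !inE => /and3P[uw wv /eqP rw]; have [_ -> ->] := flip_interval uw wv;
  have := rho_flip uw wv; rewrite !andTb => rf; apply/eqP; lia.
Qed.

Theorem proposition2p4 (M N : nat) (u v : W M N) :
  shle u v ->
  forall r : nat,
    #|[set w : W M N | [&& shle u w, shle w v & rho w == rho u + r]]| =
    #|[set w : W M N | [&& shle u w, shle w v & rho w + r == rho v]]|.
Proof.
by move=> _ r; apply: interval_rank_symmetric.
Qed.
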